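(* For all $c\in[0,\overline{c}]$, $\lim_{x\to\infty}V(x,c)=\overline{c}/q$.
   Context: Cramér–Lundberg model: the uncontrolled surplus is $X_t=x+pt-\sum_{i=1}^{N_t}U_i$, where $x\ge0$ is the initial surplus, $p>0$ the premium rate, $N_t$ a Poisson process with intensity $\beta>0$, and the claims $U_i$ are i.i.d. positive random variables, independent of $N$, with continuous distribution function $F$; $p>\beta\mathbb{E}[U_1]$. Standing assumption (A1): $F$ is globally Lipschitz with constant $K>0$. Let $(\mathcal{F}_t)$ be the completed filtration generated by $X$. Fix $\overline{c}>0$ and $q>0$. $\Pi_{x,c,\overline{c}}$ is the set of càdlàg, adapted, non-decreasing processes $C$ with $c\le C_t\le\overline{c}$; $X^C_t=X_t-\int_0^tC_sds$ ($X_0=x$), $\tau=\inf\{t\ge0:X^C_t<0\}$, $J(x;C)=\mathbb{E}[\int_0^\tau e^{-qs}C_sds]$, $V(x,c)=\sup_{C\in\Pi_{x,c,\overline{c}}}J(x;C)$. Convention: only strategies are considered such that if $C_{t^-}=p$ and $X^C_t=0$ for some $t>0$ then $C_s=p$ for $s\ge t$ until ruin; the only strategy in $\Pi_{0,p,\overline{c}}$ is to pay at rate $p$ until the first claim. *)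

From HB Require Import structures.
From mathcomp Require Import all_boot all_order all_algebra.
From mathcomp Require Import all_classical all_reals all_analysis.
Set Implicit Arguments. Unset Strict Implicit. Unset Printing Implicit Defensive.
Import Order.TTheory GRing.Theory Num.Theory.
Import numFieldNormedType.Exports.
Local Open Scope classical_set_scope.
Local Open Scope ring_scope.

Definition mutually_independent {d} {Om : measurableType d} {R : realType}
  (P : probability Om R) {I : eqType} (Y : I -> Om -> R) : Prop :=
  forall (J : seq I) (B : I -> set R), uniq J ->
    (forall i, i \in J -> measurable (B i)) ->
    P (\big[setI/setT]_(i <- J) (Y i @^-1` B i)) =
    (\prod_(i <- J) P (Y i @^-1` B i))%E.

(* Arrival times S_n = W_0 + ... + W_{n-1} (S_0 = 0), W = interarrival times. *)
Definition arrival {Om : Type} {R : realType} (W : nat -> Om -> R) (n : nat)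
  (w : Om) : R := \sum_(i < n) W i w.

(* Poisson counting process N_t = #{n >= 1 : S_n <= t}
   = least n with S_{n+1} > t (0 on the null event where no such n exists). *)
Definition Ncount {Om : Type} {R : realType} (W : nat -> Om -> R) (t : R)
  (w : Om) : nat :=
  match pselect (exists n, `[< t < arrival W n.+1 w >]) with
  | left h => ex_minn h
  | right _ => 0%N
  end.

Definition surplus {Om : Type} {R : realType} (x p : R)
  (W U : nat -> Om -> R) (t : R) (w : Om) : R :=
  x + p * t - \sum_(i < Ncount W t w) U i w.

Definition completed {d} {Om : measurableType d} {R : realType}
  (P : probability Om R) (G : set (set Om)) (A : set Om) : Prop :=
  exists B, G B /\ P.-negligible ((A `\` B) `|` (B `\` A)).

Definition filtrationX {d} {Om : measurableType d} {R : realType}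
  (P : probability Om R) (X : R -> Om -> R) (t : R) : set (set Om) :=
  completed P (<<s \bigcup_(s in `[0, t]) preimage_set_system setT (X s) measurable >>).

Definition csurplus {d} {Om : measurableType d} {R : realType}
  (X : R -> Om -> R) (C : Om -> R -> R) (t : R) (w : Om) : R :=
  X t w - Rintegral (@lebesgue_measure R) `[0, t] (C w).

(* Ruin time tau = inf{t >= 0 : X^C_t < 0} (inf of empty set = +oo). *)
Definition ruin_time {d} {Om : measurableType d} {R : realType}
  (X : R -> Om -> R) (C : Om -> R -> R) (w : Om) : \bar R :=
  ereal_inf [set t%:E | t in [set t | 0 <= t /\ csurplus X C t w < 0]].

Definition left_lim {R : realType} (f : R -> R) (t : R) : R :=
  lim (f x @[x --> t^'-]).

Definition admissible {d} {Om : measurableType d} {R : realType}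
  (P : probability Om R) (x p : R) (W U : nat -> Om -> R) (c cbar : R)
  (C : Om -> R -> R) : Prop :=
  let X := surplus x p W U in
      (forall w t, 0 <= t -> C w s @[s --> t^'+] --> C w t) /\
      (forall w t, 0 < t -> cvg (C w s @[s --> t^'-])) /\
      (forall t B, 0 <= t -> measurable B ->
         filtrationX P X t [set w | B (C w t)]) /\
      (forall w s t, 0 <= s -> s <= t -> C w s <= C w t) /\
      (forall w t, 0 <= t -> c <= C w t <= cbar) /\
      (* convention: if C_{t-} = p and X^C_t = 0 (t > 0), pay p until ruin *)
      (forall w t, 0 < t -> left_lim (C w) t = p -> csurplus X C t w = 0 ->
         forall s, t <= s -> (s%:E < ruin_time X C w)%E -> C w s = p) /\
      (* convention: the only strategy in Pi_{0,p,cbar} pays p until ruin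
         (i.e. until the first claim) *)
      (x = 0 -> c = p -> forall w s, 0 <= s -> (s%:E < ruin_time X C w)%E ->
         C w s = p).

Definition Jvalue {d} {Om : measurableType d} {R : realType}
  (P : probability Om R) (x p q : R) (W U : nat -> Om -> R)
  (C : Om -> R -> R) : \bar R :=
  let X := surplus x p W U in
  (\int[P]_w (\int[@lebesgue_measure R]_(s in
      [set s : R | (0 <= s)%R /\ (s%:E < ruin_time X C w)%E])
      (expR (- (q * s)) * C w s)%:E))%E.

Definition Vvalue {d} {Om : measurableType d} {R : realType}
  (P : probability Om R) (p q cbar : R) (W U : nat -> Om -> R)
  (x c : R) : \bar R :=
  ereal_sup [set Jvalue P x p q W U C | C in admissible P x p W U c cbar].

From HB Require Import structures.
From mathcomp Require Import all_boot all_order all_algebra.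
From mathcomp Require Import all_classical all_reals all_analysis.
From mathcomp Require Import ring lra.
Set Implicit Arguments.
Unset Strict Implicit.
Unset Printing Implicit Defensive.
Import Order.TTheory GRing.Theory Num.Theory.
Import numFieldNormedType.Exports.
Local Open Scope classical_set_scope.
Local Open Scope ring_scope.

(* Every admissible strategy pays at rate at most cbar, so
   J(x; C) <= int_0^oo cbar e^{-qs} ds = cbar / q.  Conversely, paying at the
   constant rate cbar is admissible for x > 0 and is rarely ruined early:
   given T and delta, choose m such that one of the first m interarrival times
   (i.i.d. exponential) exceeds T + 1 with probability >= 1 - delta, then k
   such that the first m claims are all at most k with probability
   >= 1 - delta.  On both events at most m claims arrive before T + 1, so for
   x >= m k + cbar (T + 1) the surplus stays nonnegative up to T + 1 and
   J(x; cbar) >= (cbar / q) (1 - e^{-qT}) (1 - 2 delta).  Hence V(x, c) is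
   squeezed to cbar / q. *)

(* No measurability is required: nonnegative integrals are suprema of
   integrals of simple functions below the integrand. *)
Lemma ge0_integral_le_dom d (T : measurableType d) (R : realType)
    (mu : {measure set T -> \bar R}) (D1 D2 : set T) (f g : T -> \bar R) :
  (forall x, D1 x -> 0 <= f x)%E -> (forall x, D2 x -> 0 <= g x)%E ->
  (forall x, D1 x -> D2 x /\ (f x <= g x)%E) ->
  (\int[mu]_(x in D1) f x <= \int[mu]_(x in D2) g x)%E.
Proof.
move=> f0 g0 fg; rewrite (ge0_integralE _ f0) (ge0_integralE _ g0).
apply: ereal_sup_le => _ [h hf <-]; exists h => // x.
apply: le_trans (hf x) _; rewrite /patch; case: ifPn => [|_].
  by rewrite inE => /fg [D2x fgx]; rewrite ifT ?inE.
by case: ifPn => [|_//]; rewrite inE => /g0.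
Qed.

Lemma cvge_le_ge_near (T : Type) (F : set_system T) (FF : Filter F)
    (R : realType) (f : T -> \bar R) (l : R) :
  (forall x, (f x <= l%:E)%E) ->
  (forall e, 0 < e -> \forall x \near F, ((l - e)%:E <= f x)%E) ->
  f @ F --> l%:E.
Proof.
move=> fl lf.
have f_fin x e : ((l - e)%:E <= f x)%E -> f x \is a fin_num.
  move=> lfx; rewrite fin_numElt (lt_le_trans (ltNyr _) lfx).
  exact: le_lt_trans (fl x) (ltry _).
apply/fine_cvgP; split; first exact: filterS (f_fin^~ 1) (lf 1 ltr01).
apply/cvgrPdist_le => e e0; apply: filterS (lf e e0) => x lfx /=.
have fxE := fineK (f_fin x e lfx).
move: lfx (fl x); rewrite -fxE !lee_fin => lfx fxl.
by rewrite ger0_norm ?subr_ge0 // lerBlDr -lerBlDl.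
Qed.

Lemma measureD_ge d (T : measurableType d) (R : realType)
    (mu : {measure set T -> \bar R}) (A B : set T) (a b : R) :
  measurable A -> measurable B -> (a%:E <= mu A)%E -> (mu B <= b%:E)%E ->
  ((a - b)%:E <= mu (A `\` B))%E.
Proof.
move=> mA mB aA Bb; rewrite EFinB leeBlDr //; apply: le_trans aA _.
rewrite (measureDI mu mA mB) leeD2l //; apply: le_trans Bb.
by apply: le_measure; rewrite ?inE //; try exact: measurableI; exact: subIsetr.
Qed.

Section discounted_integrals.
Variables (R : realType) (q : R).
Hypothesis q_gt0 : 0 < q.

Lemma discount_pdfE (c s : R) :
  0 <= s -> expR (- (q * s)) * c = c / q * exponential_pdf q s.
Proof.
by move=> s0; rewrite exponential_pdfE // mulrA divfK ?gt_eqF // mulNr mulrC.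
Qed.

Lemma discount_pdf_ge0 (c s : R) : 0 <= c -> 0 <= c / q * exponential_pdf q s.
Proof.
move=> c0; rewrite mulr_ge0 ?divr_ge0 ?(ltW q_gt0) //.
exact: exponential_pdf_ge0 (ltW q_gt0) _.
Qed.

Lemma integral_discount_le (c : R) (D : set R) (h : R -> R) :
  0 <= c -> (forall s, D s -> 0 <= s) -> (forall s, D s -> 0 <= h s <= c) ->
  (\int[lebesgue_measure]_(s in D) (expR (- (q * s)) * h s)%:E
    <= (c / q)%:E)%E.
Proof.
move=> c0 D0 hD.
apply: (@le_trans _ _ (\int[lebesgue_measure]_(s in setT)
    ((c / q)%:E * (exponential_pdf q s)%:E))%E).
  apply: ge0_integral_le_dom => [s Ds|s _|s Ds].
  - by have /andP[h0 _] := hD s Ds; rewrite lee_fin mulr_ge0 ?expR_ge0.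
  - by rewrite -EFinM lee_fin discount_pdf_ge0.
  - split => //; rewrite -EFinM lee_fin -discount_pdfE ?D0 //.
    by have /andP[_ hc] := hD s Ds; rewrite ler_wpM2l ?expR_ge0.
rewrite ge0_integralZl_EFin ?integral_exponential_pdf ?mule1 //.
- by move=> s _; rewrite lee_fin; exact: exponential_pdf_ge0 (ltW q_gt0) _.
- apply/measurable_realfun.measurable_EFinP; exact: measurable_exponential_pdf.
- by rewrite divr_ge0 ?(ltW q_gt0).
Qed.

Lemma integral_discount_ge (c T : R) (D : set R) :
  0 <= c -> 0 < T -> `[0, T] `<=` D ->
  ((c / q * (1 - expR (- (q * T))))%:E
    <= \int[lebesgue_measure]_(s in D) (expR (- (q * s)) * c)%:E)%E.
Proof.
move=> c0 T0 TD.
have -> : (c / q * (1 - expR (- (q * T))))%:E =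
    (\int[lebesgue_measure]_(s in `[0%R, T])
      ((c / q)%:E * (exponential_pdf q s)%:E))%E.
  rewrite ge0_integralZl_EFin ?divr_ge0 ?(ltW q_gt0) //.
  - have := exponential_prob_itv0c q T0; rewrite /exponential_prob => ->.
    by rewrite EFinM -EFinB mulNr.
  - by move=> s _; rewrite lee_fin; exact: exponential_pdf_ge0 (ltW q_gt0) _.
  - apply/measurable_realfun.measurable_EFinP/measurable_funTS.
    exact: measurable_exponential_pdf.
apply: ge0_integral_le_dom => [s _|s Ds|s Ts].
- by rewrite -EFinM lee_fin discount_pdf_ge0.
- by rewrite lee_fin mulr_ge0 ?expR_ge0.
- split; first exact: TD.
  move: Ts; rewrite /= in_itv /= => /andP[s0 _].
  by rewrite -EFinM discount_pdfE.
Qed.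

End discounted_integrals.

Section prefix_le.
Context {d : measure_display} {Om : measurableType d} {R : realType}.
Implicit Types (Z : nat -> Om -> R) (b : R) (m : nat).

Definition prefix_le Z b m : set Om :=
  [set w | forall i, (i < m)%N -> Z i w <= b].

Lemma prefix_leE Z b m :
  prefix_le Z b m = \big[setI/setT]_(0 <= i < m) (Z i @^-1` `]-oo, b]).
Proof.
elim: m => [|m IH]; first by rewrite big_geq //; apply/seteqP; split.
rewrite big_nat_recr //= -IH; apply/seteqP; split => w /=.
  move=> Zb; split; first by move=> i im; apply: Zb; exact: leqW.
  by rewrite in_itv /=; exact: Zb.
move=> [Zb]; rewrite in_itv /= => Zmb i; rewrite ltnS leq_eqVlt.
by case/orP => [/eqP -> // | /Zb].
Qed.

Lemma measurable_prefix_le Z b m :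
  (forall n, measurable_fun setT (Z n)) -> measurable (prefix_le Z b m).
Proof.
move=> mZ; rewrite prefix_leE; apply: bigsetI_measurable => i _.
by rewrite -[_ @^-1` _]setTI; exact: mZ.
Qed.

Variable P : probability Om R.

Lemma mutually_independent_can (I J : eqType) (Y : I -> Om -> R)
    (f : J -> I) (g : I -> J) :
  cancel f g -> mutually_independent P Y -> mutually_independent P (Y \o f).
Proof.
move=> fK indY Js B uJs mB.
have uJ : uniq (map f Js) by rewrite (map_inj_uniq (can_inj fK)).
have mBg i : i \in map f Js -> measurable ((B \o g) i).
  by case/mapP => j jJs ->; rewrite /= fK; exact: mB.
have BgfE j : (B \o g) (f j) = B j by rewrite /= fK.
have := indY _ _ uJ mBg; rewrite !big_map => PY.
transitivity (P (\big[setI/setT]_(j <- Js) (Y (f j) @^-1` (B \o g) (f j)))).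
  by congr (P _); apply: eq_bigr => j _; rewrite BgfE.
by rewrite PY; apply: eq_bigr => j _; rewrite BgfE.
Qed.

Lemma prob_prefix_le_indep Z b (r : R) m :
  mutually_independent P Z -> (forall i, P (Z i @^-1` `]-oo, b]) = r%:E) ->
  P (prefix_le Z b m) = (r ^+ m)%:E.
Proof.
move=> indZ PZ; rewrite prefix_leE indZ ?iota_uniq //.
by rewrite (eq_bigr _ (fun i _ => PZ i)) prodEFin prodr_const_nat subn0.
Qed.

Lemma prob_prefix_le_ge Z m (e : R) :
  (forall n, measurable_fun setT (Z n)) -> 0 < e ->
  exists k : nat, ((1 - e)%:E <= P (prefix_le Z k%:R m))%E.
Proof.
move=> mZ e0; pose B k := prefix_le Z k%:R m.
have mB k : measurable (B k) by exact: measurable_prefix_le.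
have ndB : {homo B : a b / (a <= b)%N >-> (a <= b)%O}.
  move=> a b ab; apply/subsetPset => w Bw i im.
  by apply: le_trans (Bw i im) _; rewrite ler_nat.
have UB : \bigcup_k B k = setT.
  apply/seteqP; split => // w _.
  have S0 : 0 <= \sum_(j < m) `|Z j w| by exact: sumr_ge0.
  exists (Num.Def.archi_bound (\sum_(j < m) `|Z j w|)) => // i im.
  apply: le_trans (ltW (archi_boundP S0)).
  apply: le_trans (ler_norm _) _.
  by rewrite (bigD1 (Ordinal im)) //= lerDl sumr_ge0.
have mUB : measurable (\bigcup_k B k) by rewrite UB.
have : (P \o B) k @[k --> \oo] --> 1%E.
  by rewrite -(probability_setT P) -UB; exact: nondecreasing_cvg_mu.
move=> /fine_cvgP[_ /cvgrPdist_lt /(_ e e0) [N _ HN]].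
exists N; have := HN N (leqnn N); rewrite /= -[P (B N)]fineK ?fin_num_measure //.
by rewrite lee_fin ltr_norml; lra.
Qed.

End prefix_le.

Section risk_process.
Context {d : measure_display} {Om : measurableType d} {R : realType}.
Implicit Types (W U : nat -> Om -> R) (w : Om).

Lemma Ncount_le W t w n : t < arrival W n.+1 w -> (Ncount W t w <= n)%N.
Proof.
rewrite /Ncount; case: pselect => [h|nh] tn //.
by case: ex_minnP => N _; apply; exact/asboolP.
Qed.

Lemma csurplus_cst x p c W U t w : 0 <= t ->
  csurplus (surplus x p W U) (fun _ _ => c) t w =
    x + p * t - \sum_(i < Ncount W t w) U i w - c * t.
Proof.
move=> t0; rewrite /csurplus Rintegral_cst //= lebesgue_measure_itv /=.
case: ifPn => [_|]; first by rewrite oppr0 adde0.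
by rewrite lte_fin -leNgt => t0'; have -> : t = 0 by apply/eqP; rewrite eq_le t0'.
Qed.

Lemma ruin_time_cst_ge x p c T k m W U w :
  0 <= p -> 0 <= c -> (forall n, 0 < W n w) -> (forall n, 0 < U n w) ->
  ~ prefix_le W T m w -> prefix_le U k m w -> m%:R * k + c * T <= x ->
  (T%:E <= ruin_time (surplus x p W U) (fun _ _ => c) w)%E.
Proof.
move=> p0 c0 W0 U0 WT Uk xbig.
have [i im TWi] : exists2 i, (i < m)%N & T < W i w.
  apply: contra_notP WT => noWi j jm; rewrite leNgt; apply/negP => TWj.
  by apply: noWi; exists j.
have k0 : 0 <= k := le_trans (ltW (U0 i)) (Uk i im).
have Nm t : t <= T -> (Ncount W t w <= m)%N.
  move=> tT; apply: leq_trans (ltnW im); apply: Ncount_le.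
  rewrite /arrival big_ord_recr /=; apply: le_lt_trans tT (lt_le_trans TWi _).
  by rewrite lerDr sumr_ge0 // => j _; exact: ltW.
have claims t : t <= T -> \sum_(j < Ncount W t w) U j w <= m%:R * k.
  move=> tT; apply: le_trans (_ : \sum_(j < Ncount W t w) k <= _).
    by apply: ler_sum => j _; apply: Uk; exact: leq_trans (ltn_ord j) (Nm t tT).
  by rewrite sumr_const card_ord -[k *+ _]mulr_natl ler_wpM2r // ler_nat Nm.
apply: le_ereal_inf_tmp => _ [t [t0 ruined] <-]; rewrite lee_fin leNgt.
apply/negP => tT; move: ruined; rewrite csurplus_cst // ltNge => /negP; apply.
have := claims t (ltW tT); have : c * t <= c * T by rewrite ler_wpM2l // ltW.
have : 0 <= p * t by rewrite mulr_ge0.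
lra.
Qed.

Variable P : probability Om R.

Lemma admissible_cst x p c cbar W U :
  0 < x -> c <= cbar -> admissible P x p W U c cbar (fun _ _ => cbar).
Proof.
move=> x0 ccb; split; [|split; [|split; [|split; [|split; [|split]]]]].
- by move=> w t _; exact: cvg_cst.
- by move=> w t _; exact: is_cvg_cst.
- move=> t B _ _; exists [set w | B cbar]; split; last first.
    by rewrite setDv setU0; exact: negligible_set0.
  have [G0 GC _] := @smallest_sigma_algebra Om setT
    (\bigcup_(s in `[0, t]) preimage_set_system setT (surplus x p W U s) measurable).
  have [Bc|nBc] := pselect (B cbar).
    suff -> : [set w | B cbar] = setT :> set Om by have := GC set0 G0; rewrite setD0.
    by apply/seteqP; split.
  suff -> : [set w | B cbar] = set0 :> set Om by [].
  by apply/seteqP; split.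
- by [].
- by move=> w t _; rewrite ccb lexx.
- by move=> w t _; rewrite /left_lim lim_cst => // cp _ s _ _.
- by move=> x00; rewrite x00 ltxx in x0.
Qed.

Lemma Jvalue_le x p q cbar W U (C : Om -> R -> R) :
  0 < q -> 0 <= cbar -> (forall w t, 0 <= t -> 0 <= C w t <= cbar) ->
  (Jvalue P x p q W U C <= (cbar / q)%:E)%E.
Proof.
move=> q0 cb0 C0cb.
apply: (@le_trans _ _ (\int[P]_(w in setT) (cst (cbar / q)%:E w))%E).
  apply: ge0_integral_le_dom => [w _|w _|w _].
  - apply: integral_ge0 => s [s0 _].
    by have /andP[C0 _] := C0cb w s s0; rewrite lee_fin mulr_ge0 ?expR_ge0.
  - by rewrite /= lee_fin divr_ge0 // ltW.
  - split => //; apply: integral_discount_le => // [s []//|s [s0 _]].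
    exact: C0cb.
rewrite integral_cst // -[leRHS]mule1 lee_wpmul2l ?probability_le1 //.
by rewrite lee_fin divr_ge0 // ltW.
Qed.

Lemma Jvalue_cst_ge x p q cbar T k m W U :
  0 < q -> 0 <= p -> 0 <= cbar -> 0 < T ->
  (forall n, measurable_fun setT (W n)) -> (forall n, measurable_fun setT (U n)) ->
  (forall n w, 0 < W n w) -> (forall n w, 0 < U n w) ->
  m%:R * k + cbar * (T + 1) <= x ->
  ((cbar / q * (1 - expR (- (q * T))))%:E
      * P (prefix_le U k m `\` prefix_le W (T + 1) m)
    <= Jvalue P x p q W U (fun _ _ => cbar))%E.
Proof.
move=> q0 p0 cb0 T0 mW mU W0 U0 xbig.
set E := _ `\` _; set a := cbar / q * _.
have mE : measurable E by apply: measurableD; exact: measurable_prefix_le.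
have a0 : 0 <= a.
  rewrite mulr_ge0 ?divr_ge0 ?(ltW q0) // subr_ge0 expR_le1 oppr_le0.
  by rewrite mulr_ge0 // ltW.
have -> : (a%:E * P E = \int[P]_(w in setT) (a%:E * (\1_E w)%:E))%E.
  rewrite ge0_integralZl_EFin ?integral_indic ?setIT //.
  apply/measurable_realfun.measurable_EFinP.
  exact: measurable_realfun.measurable_indic.
apply: ge0_integral_le_dom => [w _|w _|w _].
- by rewrite -EFinM lee_fin mulr_ge0.
- apply: integral_ge0 => s [s0 _].
  by rewrite lee_fin mulr_ge0 ?expR_ge0.
split => //; rewrite /indic; have [wE|wE] := boolP (w \in E); last first.
  rewrite -EFinM mulr0; apply: integral_ge0 => s [s0 _].
  by rewrite lee_fin mulr_ge0 ?expR_ge0.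
rewrite -EFinM mulr1; apply: integral_discount_ge => // s /=.
rewrite in_itv /= => /andP[s0 sT]; split => //.
move: wE; rewrite inE => -[Uk WT].
apply: lt_le_trans (ruin_time_cst_ge p0 cb0 (W0^~ w) (U0^~ w) WT Uk xbig).
by rewrite lte_fin; lra.
Qed.

End risk_process.

Section constant_strategy.
Context d (Om : measurableType d) (R : realType) (P : probability Om R).
Variables (p beta q cbar : R) (W U : nat -> Om -> R).
Hypotheses (p_ge0 : 0 <= p) (beta_ge0 : 0 <= beta).
Hypotheses (q_gt0 : 0 < q) (cbar_gt0 : 0 < cbar).
Hypotheses (mW : forall n, measurable_fun setT (W n))
  (mU : forall n, measurable_fun setT (U n))
  (W_gt0 : forall n w, 0 < W n w) (U_gt0 : forall n w, 0 < U n w).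
Hypothesis cdfW :
  forall n t, 0 <= t -> P [set w | W n w <= t] = (1 - expR (- (beta * t)))%:E.
Hypothesis indW : mutually_independent P W.

Lemma Jvalue_cst_ge_near T e : 0 < T -> 0 < e ->
  \forall x \near +oo,
    ((cbar / q * (1 - expR (- (q * T))) * (1 - 2 * e))%:E
      <= Jvalue P x p q W U (fun _ _ => cbar))%E.
Proof.
move=> T0 e0; pose r := 1 - expR (- (beta * (T + 1))).
have T1_ge0 : 0 <= T + 1 by rewrite addr_ge0 // ltW.
have r_ge0 : 0 <= r by rewrite subr_ge0 expR_le1 oppr_le0 mulr_ge0.
have r_lt1 : r < 1 by rewrite ltrBlDr ltrDl expR_gt0.
have [m rm] : exists m, r ^+ m <= e.
  have /cvg_expr/cvgrPdist_lt/(_ e e0) [m _ rme] : `|r| < 1 by rewrite ger0_norm.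
  exists m; have := rme m (leqnn m).
  by rewrite /= sub0r normrN ger0_norm ?exprn_ge0 // => /ltW.
have [k Uk] := prob_prefix_le_ge P m mU e0.
have PW : (P (prefix_le W (T + 1) m) <= e%:E)%E.
  rewrite (prob_prefix_le_indep _ (r := r) indW) ?lee_fin // => i.
  by rewrite -(cdfW i) //; congr (P _).
near=> x.
have xbig : m%:R * k%:R + cbar * (T + 1) <= x.
  by near: x; apply: nbhs_pinfty_ge; exact: num_real.
have := Jvalue_cst_ge P q_gt0 p_ge0 (ltW cbar_gt0) T0 mW mU W_gt0 U_gt0 xbig.
apply: le_trans.
rewrite EFinM lee_wpmul2l //.
  rewrite lee_fin mulr_ge0 ?divr_ge0 ?(ltW q_gt0) ?(ltW cbar_gt0) //.
  by rewrite subr_ge0 expR_le1 oppr_le0 mulr_ge0 // ltW.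
have mUk : measurable (prefix_le U k%:R m) := measurable_prefix_le _ _ mU.
have mWT : measurable (prefix_le W (T + 1) m) := measurable_prefix_le _ _ mW.
apply: le_trans (measureD_ge mUk mWT Uk PW); rewrite lee_fin; lra.
Unshelve. all: end_near.
Qed.

Lemma Jvalue_cst_cvg :
  Jvalue P x p q W U (fun _ _ => cbar) @[x --> +oo] --> (cbar / q)%:E.
Proof.
apply: cvge_le_ge_near => [x|e e0].
  by apply: Jvalue_le => // [|w t _]; rewrite ?lexx ltW.
pose L := cbar / q; have L0 : 0 < L by rewrite divr_gt0.
(* T and dl make the two error terms L e^{-qT} and 2 L dl at most e / 2. *)
pose T := 2 * L / (q * e).
have T0 : 0 < T := divr_gt0 (mulr_gt0 (ltr0Sn _ 1) L0) (mulr_gt0 q_gt0 e0).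
pose dl := e / (4 * L).
have dl0 : 0 < dl := divr_gt0 e0 (mulr_gt0 (ltr0Sn _ 3) L0).
have LT : L * expR (- (q * T)) <= e / 2.
  have qTE : e / 2 * (q * T) = L by rewrite /T; field; rewrite !gt_eqF.
  rewrite expRN ler_pdivrMr ?expR_gt0 // -[X in X <= _]qTE.
  by rewrite ler_wpM2l ?divr_ge0 ?(ltW e0) //; have := expR_ge1Dx (q * T); lra.
have Ldl : L * dl = e / 4 by rewrite /dl; field; rewrite gt_eqF.
apply: filterS (Jvalue_cst_ge_near T0 dl0) => x; apply: le_trans.
have LadI := mulr_ge0 (mulr_ge0 (ltW L0) (expR_ge0 (- (q * T)))) (ltW dl0).
by rewrite lee_fin -/L; nra.
Qed.

End constant_strategy.

Theorem proposition4p5 (R : realType) (d : measure_display)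
  (Om : measurableType d) (P : probability Om R)
  (p beta q cbar : R) (F : R -> R)
  (W U : nat -> Om -> R) :
  0 < p -> 0 < beta -> 0 < q -> 0 < cbar ->
  (* interarrival times: i.i.d. Exp(beta), positive *)
  (forall n, measurable_fun setT (W n)) ->
  (forall n w, 0 < W n w) ->
  (forall n t, 0 <= t -> P [set w | W n w <= t] = (1 - expR (- (beta * t)))%:E) ->
  (* claims: i.i.d. with continuous distribution function F, positive *)
  (forall n, measurable_fun setT (U n)) ->
  (forall n w, 0 < U n w) ->
  (forall n t, P [set w | U n w <= t] = (F t)%:E) ->
  continuous F ->
  (* (A1): F globally Lipschitz with constant K > 0 *)
  (exists2 K : R, 0 < K & forall a b, `|F a - F b| <= K * `|a - b|) ->
  (* all interarrival times and claims mutually independent *)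
  mutually_independent P (fun i : nat + nat =>
    match i with inl n => W n | inr n => U n end) ->
  (* net profit condition p > beta E[U_1] *)
  (beta%:E * (\int[P]_w (U 0%N w)%:E) < p%:E)%E ->
  forall c, 0 <= c <= cbar ->
    Vvalue P p q cbar W U x c @[x --> +oo] --> (cbar / q)%:E.
Proof.
move=> p0 b0 q0 cb0 mW W0 cdfW mU U0 _ _ _ indWU _ c /andP[c0 ccb].
have indW : mutually_independent P W.
  have inlK : cancel inl (fun i : nat + nat => if i is inl n then n else 0%N) by [].
  exact: mutually_independent_can inlK indWU.
have Jcvg := Jvalue_cst_cvg (ltW p0) (ltW b0) q0 cb0 mW mU W0 U0 cdfW indW.
apply: (squeeze_cvge _ Jcvg (cvg_cst _)).
near=> x; apply/andP; split.
- apply: ereal_sup_ubound; exists (fun _ _ => cbar) => //.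
  apply: admissible_cst => //; near: x; apply: nbhs_pinfty_gt; exact: num_real.
- apply: ge_ereal_sup => _ [C [_ [_ [_ [_ [Cbounds _]]]]] <-].
  apply: Jvalue_le => // [|w t t0]; first exact: ltW.
  by have /andP[cC ->] := Cbounds w t t0; rewrite (le_trans c0 cC).
Unshelve. all: end_near.
Qed.
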